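(* Let $p\ge2$ be an integer and let $(a_n)_{n\ge0}$ be the Patalan numbers of order $p$. Define $d_0=-1/p$ and $d_n=a_{n-1}$ for $n\ge1$, with generating function $D(x)=\sum_{n\ge0}d_nx^n=xA(x)-1/p$. Then $g(D(x))=x$, where $g(x)=\frac{1-(-px)^p}{p^2}$, and for every $n\ge2$, \[ d_n=(-1)^p\,p^{p-2}\,t^{(p)}_n , \] where $t^{(k)}_n$ are the truncated convolution powers of the sequence $(d_n)$.
   Context: For an integer $p\ge2$, the Patalan numbers of order $p$ are the coefficients $a_n$ of \[ A(x)=\sum_{n\ge0}a_nx^n=\frac{1-(1-p^2x)^{1/p}}{p\,x} \] (so $a_0=1$). For a sequence $(d_n)_{n\ge0}$ with generating function $D(x)$, set $d^{(k)}_n=[x^n]D(x)^k$ for $k\ge1$, $n\ge0$; the truncated convolution powers are defined recursively by $t^{(1)}_n=0$ for all $n$ and, for $k>1$, \[ t^{(k)}_n=\sum_{j=1}^{n-1}d_{n-j}\,d^{(k-1)}_j+d_0\,t^{(k-1)}_n \] (the sum being empty when $n\le1$). *)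

From HB Require Import structures.
From mathcomp Require Import all_boot all_order all_algebra.
Set Implicit Arguments. Unset Strict Implicit. Unset Printing Implicit Defensive.
Import Order.TTheory GRing.Theory Num.Theory.
Local Open Scope ring_scope.

Definition gbinom (r : rat) (k : nat) : rat :=
  (\prod_(i < k) (r - i%:R)) / (k`!)%:R.

(* Patalan numbers of order p: a_n = [x^n] (1 - (1 - p^2 x)^(1/p)) / (p x),
   where (1 - p^2 x)^(1/p) = sum_k binom(1/p, k) (-p^2 x)^k.
   Hence a_n = - binom(1/p, n+1) (-p^2)^(n+1) / p. *)
Definition patalan (p n : nat) : rat :=
  - (gbinom (p%:R)^-1 n.+1 * (- (p%:R ^+ 2)) ^+ n.+1) / p%:R.

Definition dseq (p n : nat) : rat :=
  match n with
  | 0 => - (p%:R)^-1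
  | m.+1 => patalan p m
  end.

(* d^(k)_n = [x^n] D(x)^k  (Cauchy convolution powers; k = 0 gives 1) *)
Fixpoint dpow (p k n : nat) : rat :=
  match k with
  | 0 => (n == 0%N)%:R
  | k'.+1 => \sum_(j < n.+1) dseq p (n - j) * dpow p k' j
  end.

(* truncated convolution powers: t^(1)_n = 0,
   t^(k)_n = sum_{j=1}^{n-1} d_(n-j) d^(k-1)_j + d_0 t^(k-1)_n  (k > 1);
   the value at k = 0 is an unused junk value 0. *)
Fixpoint tpow (p k n : nat) : rat :=
  match k with
  | 0 => 0
  | 1 => 0
  | (k'.+1) as k1 =>
      \sum_(1 <= j < n) dseq p (n - j) * dpow p k' j + dseq p 0 * tpow p k' n
  end.

(* The sequence d_n is hypergeometric: (n+1) d_(n+1) = p^2 (n - 1/p) d_n.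
   Convolving two such sequences adds their shift parameters, so D(x)^k is
   hypergeometric with parameter k/p.  For k = p the factor (n - 1) kills
   every coefficient of D(x)^p beyond x^1, which is the identity g(D(x)) = x.
   Finally D(x)^p and its truncation differ, for n >= 1, exactly by the p
   terms containing d_n once, p d_0^(p-1) d_n; as [x^n] D(x)^p = 0 for
   n >= 2 this expresses d_n through the truncated power. *)

From HB Require Import structures.
From mathcomp Require Import all_boot all_order all_algebra.
From mathcomp Require Import ring.
Set Implicit Arguments. Unset Strict Implicit. Unset Printing Implicit Defensive.
Import Order.TTheory GRing.Theory Num.Theory.
Local Open Scope ring_scope.

Definition hypergeometric (R : comPzRingType) (Q a : R) (f : nat -> R) :=
  forall n : nat, n.+1%:R * f n.+1 = Q * (n%:R - a) * f n.

Definition conv (R : comPzRingType) (f g : nat -> R) (n : nat) : R :=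
  \sum_(j < n.+1) f (n - j)%N * g j.

Lemma hypergeometric_conv (R : comPzRingType) (Q a b : R) (f g : nat -> R) :
  hypergeometric Q a f -> hypergeometric Q b g ->
  hypergeometric Q (a + b) (conv f g).
Proof.
move=> hf hg n; rewrite /conv.
(* Split the weight n+1 as (n+1-j) + j and shift each half by the recurrences. *)
have split_weight (j : 'I_n.+2) : n.+1%:R * (f (n.+1 - j)%N * g j)
    = (n.+1 - j)%N%:R * f (n.+1 - j)%N * g j + f (n.+1 - j)%N * (j%:R * g j).
  have hj : (j <= n.+1)%N by rewrite -ltnS.
  transitivity (((n.+1 - j)%N%:R + j%:R) * (f (n.+1 - j)%N * g j)); last ring.
  by rewrite -natrD subnK.
rewrite mulr_sumr (eq_bigr _ (fun j _ => split_weight j)) big_split /=.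
rewrite big_ord_recr /= subnn mulr0n !mul0r addr0.
rewrite [X in _ + X]big_ord_recl /= mulr0n mul0r mulr0 add0r.
rewrite mulr_sumr -big_split; apply: eq_bigr => i _ /=.
have hi : (i <= n)%N by rewrite -ltnS.
rewrite /bump /= add1n subSn // subSS hf hg natrB //; ring.
Qed.

Lemma hypergeometric_eq0 (R : numDomainType) (Q : R) (m : nat) (f : nat -> R) :
  hypergeometric Q m%:R f -> forall n, (m < n)%N -> f n = 0.
Proof.
move=> hf; elim=> [|n IH] //; rewrite ltnS leq_eqVlt => /orP[/eqP <-|hmn].
  by have := hf m; rewrite subrr mulr0 mul0r => /eqP; rewrite mulf_eq0 pnatr_eq0 => /eqP.
by have := hf n; rewrite IH // mulr0 => /eqP; rewrite mulf_eq0 pnatr_eq0 => /eqP.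
Qed.

Lemma gbinomS (r : rat) (k : nat) : gbinom r k.+1 = gbinom r k * (r - k%:R) / k.+1%:R.
Proof.
rewrite /gbinom big_ord_recr /= factS natrM.
have hk : (k.+1%:R : rat) != 0 by rewrite pnatr_eq0.
have hfact : ((k`!)%:R : rat) != 0 by rewrite pnatr_eq0 -lt0n fact_gt0.
by field; rewrite addrC natr1 hk hfact.
Qed.

Lemma gbinom0 (r : rat) : gbinom r 0 = 1.
Proof. by rewrite /gbinom big_ord0 divr1. Qed.

Lemma dpowS (p k : nat) : dpow p k.+1 = conv (dseq p) (dpow p k).
Proof. by []. Qed.

Lemma dpow_at0 (p k : nat) : dpow p k 0 = dseq p 0 ^+ k.
Proof. by elim: k => [|k IH] //=; rewrite big_ord1 /= IH exprS. Qed.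

(* Only the two extreme terms j = 0 and j = n of the convolution are dropped
   from the truncated power; the term j = n recursively contributes d_0^k d_n. *)
Lemma dpow_sub_tpow (p k n : nat) : (1 <= n)%N ->
  dpow p k.+1 n - tpow p k.+1 n = k.+1%:R * dseq p 0 ^+ k * dseq p n.
Proof.
move=> hn; elim: k => [|k IH].
  rewrite /= big_ord_recl /= subn0 mulr1n big1 ?subr0 ?addr0 ?mulr1 ?mul1r //.
  by move=> i _; rewrite mulr0n mulr0.
have -> : tpow p k.+2 n
    = \sum_(1 <= j < n) dseq p (n - j) * dpow p k.+1 j + dseq p 0 * tpow p k.+1 n
  by [].
rewrite dpowS /conv -(big_mkord xpredT (fun j => dseq p (n - j) * dpow p k.+1 j)).
rewrite big_ltn // big_nat_recr // subn0 subnn dpow_at0.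
have -> : dpow p k.+1 n = tpow p k.+1 n + k.+1%:R * dseq p 0 ^+ k * dseq p n
  by rewrite -IH; ring.
by rewrite -[k.+2%:R]natr1 exprS /=; ring.
Qed.

Section PatalanOrder.
Variable p : nat.
Hypothesis p_ge2 : (2 <= p)%N.
Local Notation P := (p%:R : rat).

Lemma P_neq0 : P != 0.
Proof. by rewrite pnatr_eq0 -lt0n (leq_trans _ p_ge2). Qed.

Lemma oppP_mul_dseq0 : - P * dseq p 0 = 1.
Proof. by rewrite /= mulrNN divff // P_neq0. Qed.

Lemma dseq_hypergeometric : hypergeometric (P ^+ 2) P^-1 (dseq p).
Proof.
have hP := P_neq0.
case=> [|m] /=; rewrite /patalan gbinomS.
  by rewrite gbinom0; field; rewrite hP.
have hm : (m.+2%:R : rat) != 0 by rewrite pnatr_eq0.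
rewrite exprS; field; rewrite hP /=.
by rewrite -[2 + _](natrD _ 2 m) hm.
Qed.

Lemma dpow_hypergeometric k : hypergeometric (P ^+ 2) (k%:R * P^-1) (dpow p k).
Proof.
elim: k => [|k IH] n.
  by case: n => [|n] /=; rewrite ?mulr0 ?mul0r ?mulr0n ?mulr1n ?mulr0.
rewrite dpowS (hypergeometric_conv dseq_hypergeometric IH) -natr1.
by congr (_ * (_ - _) * _); ring.
Qed.

Lemma dpowp_hypergeometric : hypergeometric (P ^+ 2) 1%:R (dpow p p).
Proof. by move=> n; rewrite dpow_hypergeometric divff // P_neq0. Qed.

Lemma dpowp_eq0 n : (2 <= n)%N -> dpow p p n = 0.
Proof. exact: hypergeometric_eq0 dpowp_hypergeometric n. Qed.

Lemma dpowp_at1 : dpow p p 1 = - P ^+ 2 * dseq p 0 ^+ p.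
Proof.
by have := dpowp_hypergeometric 0; rewrite mul1r dpow_at0 sub0r mulrN1 => ->.
Qed.

End PatalanOrder.

Theorem mainTheorem11 (p : nat) (hp : (2 <= p)%N) :
  (forall n : nat,
      ((n == 0%N)%:R - (- (p%:R : rat)) ^+ p * dpow p p n) / (p%:R ^+ 2)
      = (n == 1%N)%:R) /\
  (forall n : nat, (2 <= n)%N ->
      dseq p n = (-1) ^+ p * (p%:R : rat) ^+ (p - 2) * tpow p p n).
Proof.
have hP := P_neq0 hp.
have oppPd0 := oppP_mul_dseq0 hp.
split.
  case=> [|[|n]].
  - by rewrite dpow_at0 -exprMn oppPd0 expr1n subrr mul0r.
  - rewrite dpowp_at1 // mulrCA -exprMn oppPd0 expr1n mulr1 /=.
    by field; rewrite hP.
  - by rewrite dpowp_eq0 // mulr0 subr0 mul0r.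
move=> n hn.
have [m def_p] : exists m, p = m.+2 by exists p.-2; rewrite -(subnK hp) addn2.
subst p; set P := (m.+2%:R : rat); set d0 := dseq m.+2 0.
have := dpow_sub_tpow m.+2 m.+1 (ltnW hn).
rewrite dpowp_eq0 // sub0r => ht.
have -> : tpow m.+2 m.+2 n = - (P * d0 ^+ m.+1 * dseq m.+2 n)
  by rewrite -[LHS]opprK ht.
transitivity ((- P * d0) ^+ m.+1 * dseq m.+2 n); first by rewrite oppPd0 expr1n mul1r.
by rewrite subn2 /= exprMn (exprNn P) !exprS; ring.
Qed.
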